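(* Let $M$ be a manifold of dimension $m$, and let $X_p$ and $X_s$ be two commuting vector fields on $M$ possessing $m-2$ independent common integrals of motion $H_1,\dots,H_{m-2}$. Let $h(x)=E\,x^2+F\,x+G$ be a quadratic polynomial in $x$ whose coefficients $E,F,G$ are functions on $M$ satisfying the Kowalewski separability conditions \[ E F_s - F E_s = E G_p - G E_p, \qquad E G_s - G E_s = F G_p - G F_p , \] where $E_p=X_p(E)$, $E_s=X_s(E)$, and similarly for $F$ and $G$. Then the roots $x_1,x_2$ of the equation $E x^2+F x+G=0$ are separating coordinates for $X_p$ and $X_s$.
   Context: ''Separating coordinates'' is meant in the following sense: in the coordinate system $(x_1,x_2,H_1,\dots,H_{m-2})$ (adapted to the two-dimensional foliation spanned by $X_p,X_s$), there exist functions $\psi_1,\psi_2$ such that \[ X_s + x_1 X_p = \psi_1\,\frac{\partial}{\partial x_1},\qquad X_s + x_2 X_p = \psi_2\,\frac{\partial}{\partial x_2}, \] with $\psi_1$ independent of $x_2$ and $\psi_2$ independent of $x_1$ (i.e. $\psi_1=\psi_1(x_1,H_1,\dots,H_{m-2})$, $\psi_2=\psi_2(x_2,H_1,\dots,H_{m-2})$). *)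

(* Local (chart) formulation on an open subset U of R^(n+2). *)
From HB Require Import structures.
From mathcomp Require Import all_boot all_order all_algebra.
From mathcomp Require Import all_classical all_reals all_analysis.
Set Implicit Arguments. Unset Strict Implicit. Unset Printing Implicit Defensive.
Import Order.TTheory GRing.Theory Num.Theory.
Import numFieldNormedType.Exports.
Local Open Scope classical_set_scope.
Local Open Scope ring_scope.

Notation Pt R n := 'rV[R]_(n.+2).

Definition lie {R : realType} {n : nat} (X : Pt R n -> Pt R n) (f : Pt R n -> R)
  : Pt R n -> R := fun x => 'D_(X x) f x.

Fixpoint iterD {R : realType} {n : nat} (vs : seq (Pt R n)) (f : Pt R n -> R)
  : Pt R n -> R :=
  match vs with
  | [::] => f
  | v :: vs' => fun x => 'D_v (iterD vs' f) x
  end.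

Definition smooth_on {R : realType} {n : nat} (U : set (Pt R n)) (f : Pt R n -> R) :=
  forall (vs : seq (Pt R n)) (x : Pt R n), U x -> differentiable (iterD vs f) x.

Definition smooth_field {R : realType} {n : nat} (U : set (Pt R n))
  (X : Pt R n -> Pt R n) :=
  forall i : 'I_n.+2, smooth_on U (fun x => X x ord0 i).

Definition commute_on {R : realType} {n : nat} (U : set (Pt R n))
  (X Y : Pt R n -> Pt R n) :=
  forall f, smooth_on U f -> forall x, U x -> lie X (lie Y f) x = lie Y (lie X f) x.

Definition first_integral {R : realType} {n : nat} (U : set (Pt R n))
  (X : Pt R n -> Pt R n) (H : Pt R n -> R) :=
  forall x, U x -> lie X H x = 0.

Definition indep_at {R : realType} {n k : nat} (x : Pt R n) (phi : 'I_k -> Pt R n -> R) :=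
  forall c : 'I_k -> R,
    (forall v : Pt R n, \sum_(i < k) c i * 'D_v (phi i) x = 0) -> forall i, c i = 0.

Definition coords {R : realType} {n : nat} (x1 x2 : Pt R n -> R)
  (H : 'I_n -> Pt R n -> R) : 'I_n.+2 -> Pt R n -> R :=
  fun k => match @fintype.split 2 n k with
           | inl j => if val j == 0%N then x1 else x2
           | inr i => H i
           end.

Definition idx0 {n : nat} : 'I_n.+2 := @Ordinal n.+2 0 isT.
Definition idx1 {n : nat} : 'I_n.+2 := @Ordinal n.+2 1 isT.

(* Y is the coordinate vector field d/d(phi j) on U *)
Definition coord_field {R : realType} {n : nat} (U : set (Pt R n))
  (phi : 'I_n.+2 -> Pt R n -> R) (j : 'I_n.+2) (Y : Pt R n -> Pt R n) :=
  forall x, U x -> forall k, 'D_(Y x) (phi k) x = (k == j)%:R.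

(* x1, x2 are separating coordinates for Xp, Xs in the coordinate system
   (x1, x2, H_1, ..., H_n): X_s + x_i X_p = psi_i d/dx_i with psi_1 not depending
   on x2 and psi_2 not depending on x1 *)
Definition separating_coordinates {R : realType} {n : nat} (U : set (Pt R n))
  (Xp Xs : Pt R n -> Pt R n) (x1 x2 : Pt R n -> R) (H : 'I_n -> Pt R n -> R) :=
  exists psi1 psi2 : Pt R n -> R,
    forall Y1 Y2 : Pt R n -> Pt R n,
      coord_field U (coords x1 x2 H) idx0 Y1 ->
      coord_field U (coords x1 x2 H) idx1 Y2 ->
      forall x, U x ->
        [/\ Xs x + x1 x *: Xp x = psi1 x *: Y1 x,
            Xs x + x2 x *: Xp x = psi2 x *: Y2 x,
            differentiable psi1 x /\ differentiable psi2 x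
          & 'D_(Y2 x) psi1 x = 0 /\ 'D_(Y1 x) psi2 x = 0].

From HB Require Import structures.
From mathcomp Require Import all_boot all_order all_algebra.
From mathcomp Require Import all_classical all_reals all_analysis.
From mathcomp Require Import ring.
Set Implicit Arguments.
Unset Strict Implicit.
Unset Printing Implicit Defensive.

Import Order.TTheory GRing.Theory Num.Theory.
Import numFieldNormedType.Exports.
Local Open Scope classical_set_scope.
Local Open Scope ring_scope.

(* The Kowalewski conditions say exactly that the field X_s + x_1 X_p annihilates
   the other root x_2, and symmetrically: differentiate E x_2^2 + F x_2 + G = 0 along
   X_s and X_p and eliminate F, G with Vieta's formulas.  Since these fields also
   annihilate the integrals H_i, in the coordinates (x_1, x_2, H) the field
   X_s + x_1 X_p is psi_1 d/dx_1 with psi_1 = (X_s + x_1 X_p) x_1.  Differentiating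
   X_s x_1 + x_2 X_p x_1 = 0 along X_s and X_p and using [X_p, X_s] = 0 shows that
   X_s + x_2 X_p, hence d/dx_2, annihilates psi_1. *)

Section Algebra.
Variable R : idomainType.

Lemma quadratic_vieta (E F G a b : R) : a != b ->
  E * a ^+ 2 + F * a + G = 0 -> E * b ^+ 2 + F * b + G = 0 ->
  F = - (E * (a + b)) /\ G = E * a * b.
Proof.
move=> ab ra rb.
have hF : F = - (E * (a + b)).
  apply/eqP; rewrite -addr_eq0 addrC; apply/eqP.
  have /eqP : (a - b) * (E * (a + b) + F) = 0.
    by rewrite -[RHS](subrr 0) -{1}ra -rb; ring.
  by rewrite mulf_eq0 subr_eq0 (negbTE ab) => /eqP.
by split=> //; apply/eqP; rewrite -subr_eq0 -ra hF; apply/eqP; ring.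
Qed.

(* Read Es = X_s E, bs = X_s b, Ep = X_p E, ...; the last two hypotheses are the
   root equation of b differentiated along X_s and X_p. *)
Lemma kowalewski_root_identity (E F G a b Es Fs Gs Ep Fp Gp bs bp : R) :
  E != 0 -> a != b ->
  E * a ^+ 2 + F * a + G = 0 -> E * b ^+ 2 + F * b + G = 0 ->
  E * Fs - F * Es = E * Gp - G * Ep -> E * Gs - G * Es = F * Gp - G * Fp ->
  Es * b ^+ 2 + E * (2 * b * bs) + Fs * b + F * bs + Gs = 0 ->
  Ep * b ^+ 2 + E * (2 * b * bp) + Fp * b + F * bp + Gp = 0 ->
  bs + a * bp = 0.
Proof.
move=> E0 ab ra rb K1 K2 Ds Dp.
have [hF hG] := quadratic_vieta ab ra rb.
have : (bs + a * bp) * (E * E * (b - a)) =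
    E * ((Es * b ^+ 2 + E * (2 * b * bs) + Fs * b + F * bs + Gs)
         + a * (Ep * b ^+ 2 + E * (2 * b * bp) + Fp * b + F * bp + Gp))
    - b * ((E * Fs - F * Es) - (E * Gp - G * Ep))
    - ((E * Gs - G * Es) - (F * Gp - G * Fp)).
  by rewrite hF hG; ring.
rewrite Ds Dp K1 K2 !subrr !(mulr0, addr0, subr0).
have ba : b - a != 0 by rewrite subr_eq0 eq_sym.
by move/eqP; rewrite !mulf_eq0 (negbTE E0) (negbTE ba) !orbF => /eqP.
Qed.
End Algebra.

(* Read sa = X_s a, pa = X_p a, spa = X_s (X_p a), psa = X_p (X_s a), ...: the
   hypotheses are (X_s + a X_p) b = 0, (X_s + b X_p) a = 0, the latter differentiated
   along X_s and X_p, and [X_p, X_s] a = 0. *)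
Lemma pencil_invariance_identity (R : comPzRingType) (a b sa pa sb pb ssa spa psa ppa : R) :
  sb + a * pb = 0 -> sa + b * pa = 0 ->
  ssa + b * spa + pa * sb = 0 -> psa + b * ppa + pa * pb = 0 -> psa = spa ->
  (ssa + a * spa + pa * sa) + b * (psa + a * ppa + pa * pa) = 0.
Proof.
move=> Ab Ba Ds Dp C.
have -> : (ssa + a * spa + pa * sa) + b * (psa + a * ppa + pa * pa) =
    (ssa + b * spa + pa * sb) + a * (psa + b * ppa + pa * pb)
    + pa * (sa + b * pa) - pa * (sb + a * pb) + (a - b) * (spa - psa) by ring.
by rewrite Ab Ba Ds Dp C subrr !(mulr0, addr0, subr0).
Qed.

Section LieDerivative.
Variables (R : realType) (n : nat).
Implicit Types (U : set (Pt R n)) (X : Pt R n -> Pt R n) (E F G b f g : Pt R n -> R)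
  (x v : Pt R n).

(* Agrees with [lie X f] wherever [f] is differentiable, but unlike [lie X f] it is
   differentiable as soon as [X] and the partial derivatives of [f] are. *)
Definition lie_partials X f : Pt R n -> R :=
  fun y => \sum_(j < n.+2) X y 0 j * 'D_(delta_mx 0 j : Pt R n) f y.

Lemma derive_partials f x v : differentiable f x ->
  'D_v f x = \sum_(j < n.+2) v 0 j * 'D_(delta_mx 0 j : Pt R n) f x.
Proof.
move=> df; rewrite {1}(row_sum_delta v) deriveE // linear_sum.
by apply: eq_bigr => j _; rewrite linearZ -deriveE.
Qed.

Lemma lie_partialsE X f x : differentiable f x -> lie X f x = lie_partials X f x.
Proof. exact: derive_partials. Qed.

Lemma differentiable_lie_partials X f x :
  (forall j, differentiable (fun y => X y 0 j) x) ->
  (forall j, differentiable (fun y => 'D_(delta_mx 0 j : Pt R n) f y) x) ->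
  differentiable (lie_partials X f) x.
Proof.
move=> dX df.
have -> : lie_partials X f = \sum_(j < n.+2)
    ((fun y => X y 0 j) * (fun y => 'D_(delta_mx 0 j : Pt R n) f y)).
  by apply/funext => y; rewrite /lie_partials fct_sumE.
by apply: differentiable_sum => j; apply: differentiableM.
Qed.

Lemma derive_eq0_open U g x v : open U -> U x -> (forall y, U y -> g y = 0) ->
  'D_v g x = 0.
Proof.
move=> oU Ux g0; rewrite (near_eq_derive (g := cst 0)) ?derive_cst //.
by near=> y; rewrite g0 //; near: y; apply: open_nbhs_nbhs.
Unshelve. all: by end_near.
Qed.

Lemma derive_lie U X f x v : open U -> U x -> (forall y, U y -> differentiable f y) ->
  'D_v (lie X f) x = 'D_v (lie_partials X f) x.
Proof.
move=> oU Ux df; apply: near_eq_derive.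
by near=> y; apply: lie_partialsE; apply: df; near: y; apply: open_nbhs_nbhs.
Unshelve. all: by end_near.
Qed.

Lemma smooth_on_differentiable U f x : smooth_on U f -> U x -> differentiable f x.
Proof. by move=> sf; apply: (sf [::]). Qed.

Lemma smooth_differentiable_lie_partials U X f x :
  smooth_field U X -> smooth_on U f -> U x -> differentiable (lie_partials X f) x.
Proof.
move=> sX sf Ux; apply: differentiable_lie_partials => j.
  exact: (sX j [::]).
exact: (sf [:: _]).
Qed.

Lemma derive_quadratic E F G b x v :
  differentiable E x -> differentiable F x -> differentiable G x -> differentiable b x ->
  'D_v (E * (b * b) + F * b + G) x = 'D_v E x * b x ^+ 2 + E x * (2 * b x * 'D_v b x)
    + 'D_v F x * b x + F x * 'D_v b x + 'D_v G x.
Proof.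
move=> dE dF dG db.
have der f : differentiable f x -> derivable f x v by apply: diff_derivable.
rewrite !deriveD ?deriveM; try by apply: der;
  repeat (apply: differentiableD || apply: differentiableM).
by rewrite !fctE /GRing.scale /=; ring.
Qed.

Lemma derive_eq0_scale g x (c : R) u : differentiable g x -> c *: u != 0 ->
  'D_(c *: u) g x = 0 -> 'D_u g x = 0.
Proof.
move=> dg cu0; rewrite deriveE // linearZ -deriveE // => /eqP.
by rewrite mulf_eq0 => /orP[/eqP c0|/eqP //]; move: cu0; rewrite c0 scale0r eqxx.
Qed.

End LieDerivative.

Section Coordinates.
Variables (R : realType) (n : nat).
Implicit Types (U : set (Pt R n)) (x v : Pt R n) (phi : 'I_n.+2 -> Pt R n -> R).

Lemma indep_derive_eq0 phi x v :
  (forall k, differentiable (phi k) x) -> indep_at x phi ->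
  (forall k, 'D_v (phi k) x = 0) -> v = 0.
Proof.
move=> dphi ind v0.
pose J : 'M[R]_(n.+2) := \matrix_(k, j) 'D_(delta_mx 0 j : Pt R n) (phi k) x.
have DJ w k : 'D_w (phi k) x = (w *m J^T) 0 k.
  by rewrite derive_partials // mxE; apply: eq_bigr => j _; rewrite !mxE.
have J_inj (c : 'rV[R]_(n.+2)) : c *m J = 0 -> c = 0.
  move=> cJ; apply/rowP => k; rewrite mxE; apply: (ind (fun k => c 0 k)) => w.
  have -> : \sum_(l < n.+2) c 0 l * 'D_w (phi l) x = ((w *m J^T) *m c^T) 0 0.
    by rewrite mxE; apply: eq_bigr => l _; rewrite DJ !mxE mulrC.
  by rewrite -mulmxA -trmx_mul cJ trmx0 mulmx0 mxE.
have J_free : row_free J.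
  rewrite -kermx_eq0; apply/eqP/row_matrixP => i; rewrite row0.
  by apply: J_inj; rewrite -row_mul mulmx_ker row0.
have JT_unit : J^T \in unitmx by rewrite unitmx_tr -row_free_unit.
have vJ : v *m J^T = 0 by apply/rowP => k; rewrite -DJ v0 mxE.
by rewrite -(mulmxK JT_unit v) vJ mul0mx.
Qed.

Lemma coord_field_scale U phi j Y x v :
  (forall k, differentiable (phi k) x) -> indep_at x phi ->
  coord_field U phi j Y -> U x ->
  (forall k, k != j -> 'D_v (phi k) x = 0) -> v = 'D_v (phi j) x *: Y x.
Proof.
move=> dphi ind cY Ux v0; apply/eqP; rewrite -subr_eq0; apply/eqP.
apply: (indep_derive_eq0 dphi ind) => k.
rewrite deriveE // linearB linearZ /= -!deriveE // cY //.
have [->|kj] := eqVneq k j; first by rewrite scaler1 subrr.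
by rewrite v0 // scaler0 subrr.
Qed.

Variables (x1 x2 : Pt R n -> R) (H : 'I_n -> Pt R n -> R).

Lemma coords0 : coords x1 x2 H idx0 = x1.
Proof. by rewrite /coords; case: splitP => [j /= <-|i] //. Qed.

Lemma coords1 : coords x1 x2 H idx1 = x2.
Proof. by rewrite /coords; case: splitP => [j /= <-|i] //. Qed.

Lemma coords_cases k : [\/ k = idx0, k = idx1 | exists i, coords x1 x2 H k = H i].
Proof.
rewrite /coords; case: splitP => [[[|[|//]] lt2] /= hk|i _]; last by apply: Or33; exists i.
  by apply: Or31; apply: val_inj.
by apply: Or32; apply: val_inj.
Qed.

Lemma smooth_coords U k : smooth_on U x1 -> smooth_on U x2 ->
  (forall i, smooth_on U (H i)) -> smooth_on U (coords x1 x2 H k).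
Proof.
by move=> s1 s2 sH; case: (coords_cases k) => [->|->|[i ->]]; rewrite ?coords0 ?coords1.
Qed.

End Coordinates.

Definition pencil (R : realType) (n : nat) (Xp Xs : Pt R n -> Pt R n) (a : Pt R n -> R) :
  Pt R n -> Pt R n := fun y => Xs y + a y *: Xp y.

Definition pencil_factor (R : realType) (n : nat) (Xp Xs : Pt R n -> Pt R n)
  (a : Pt R n -> R) : Pt R n -> R := lie_partials (pencil Xp Xs a) a.

Section Pencil.
Variables (R : realType) (n : nat) (U : set (Pt R n)) (Xp Xs : Pt R n -> Pt R n).
Implicit Types (a b f : Pt R n -> R) (x v : Pt R n) (Y : Pt R n -> Pt R n).
Local Notation pencil := (pencil Xp Xs).
Local Notation pencil_factor := (pencil_factor Xp Xs).

Lemma lie_pencil a f x : differentiable f x ->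
  lie (pencil a) f x = lie Xs f x + a x * lie Xp f x.
Proof. by move=> df; rewrite /lie /pencil deriveE // linearD linearZ -!deriveE. Qed.

Lemma lie_partials_pencil a f :
  lie_partials (pencil a) f = lie_partials Xs f + a * lie_partials Xp f.
Proof.
apply/funext => y; rewrite /lie_partials !fctE big_distrr -big_split /=.
by apply: eq_bigr => j _; rewrite !mxE; ring.
Qed.

Lemma first_integral_pencil a h : (forall y, U y -> differentiable h y) ->
  first_integral U Xp h -> first_integral U Xs h -> first_integral U (pencil a) h.
Proof.
move=> dh hp hs y Uy; rewrite lie_pencil; first by rewrite hs // hp // mulr0 addr0.
exact: dh.
Qed.

Lemma pencil_neq0 a x : (forall c d : R, c *: Xp x + d *: Xs x = 0 -> c = 0 /\ d = 0) ->
  pencil a x != 0.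
Proof.
move=> indX; apply/eqP => p0; have := indX (a x) 1.
by rewrite scale1r addrC => /(_ p0) [_ /eqP]; rewrite oner_eq0.
Qed.

Lemma pencil_coord_field (phi : 'I_n.+2 -> Pt R n -> R) j Y a x :
  (forall k, differentiable (phi k) x) -> indep_at x phi ->
  coord_field U phi j Y -> U x -> phi j = a ->
  (forall k, k != j -> lie (pencil a) (phi k) x = 0) ->
  pencil a x = pencil_factor a x *: Y x.
Proof.
move=> dphi ind cY Ux <- kill; rewrite /pencil_factor -lie_partialsE //.
exact: coord_field_scale dphi ind cY Ux kill.
Qed.

Hypotheses (oU : open U) (sXp : smooth_field U Xp) (sXs : smooth_field U Xs).

Lemma differentiable_pencil_factor a x :
  smooth_on U a -> U x -> differentiable (pencil_factor a) x.
Proof.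
move=> sa Ux; rewrite /pencil_factor lie_partials_pencil.
have dLs := smooth_differentiable_lie_partials sXs sa Ux.
have dLp := smooth_differentiable_lie_partials sXp sa Ux.
have da := smooth_on_differentiable sa Ux.
by apply: differentiableD => //; apply: differentiableM.
Qed.

Lemma derive_lie_partials_pencil a f x v :
  smooth_on U a -> smooth_on U f -> U x ->
  'D_v (lie_partials (pencil a) f) x =
  'D_v (lie_partials Xs f) x + a x * 'D_v (lie_partials Xp f) x
  + lie_partials Xp f x * 'D_v a x.
Proof.
move=> sa sf Ux; rewrite lie_partials_pencil.
have dLs := @diff_derivable _ _ _ _ _ v (smooth_differentiable_lie_partials sXs sf Ux).
have dLp := @diff_derivable _ _ _ _ _ v (smooth_differentiable_lie_partials sXp sf Ux).
have da := @diff_derivable _ _ _ _ _ v (smooth_on_differentiable sa Ux).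
by rewrite (deriveD dLs (derivableM da dLp)) (deriveM da dLp) addrA.
Qed.

Lemma pencil_factor_invariant a b x : commute_on U Xp Xs ->
  smooth_on U a -> smooth_on U b ->
  (forall y, U y -> lie (pencil a) b y = 0) ->
  (forall y, U y -> lie (pencil b) a y = 0) -> U x ->
  'D_(pencil b x) (pencil_factor a) x = 0.
Proof.
move=> comm sa sb ab0 ba0 Ux.
have da y : U y -> differentiable a y by apply: smooth_on_differentiable.
have dpsi := differentiable_pencil_factor sa Ux.
have D_ba0 v : 'D_v (lie_partials Xs a) x + b x * 'D_v (lie_partials Xp a) x
    + lie_partials Xp a x * 'D_v b x = 0.
  rewrite -derive_lie_partials_pencil //; apply: derive_eq0_open oU Ux _ => y Uy.
  by rewrite -lie_partialsE ?ba0 //; apply: da.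
have comm_a : 'D_(Xp x) (lie_partials Xs a) x = 'D_(Xs x) (lie_partials Xp a) x.
  by rewrite -(derive_lie Xs _ oU Ux da) -(derive_lie Xp _ oU Ux da); apply: comm.
have Xpa : 'D_(Xp x) a x = lie_partials Xp a x by apply: lie_partialsE; apply: da.
have ab0x : lie Xs b x + a x * lie Xp b x = 0.
  by rewrite -lie_pencil ?ab0 //; apply: smooth_on_differentiable sb Ux.
have ba0x : lie Xs a x + b x * lie_partials Xp a x = 0.
  by rewrite -Xpa -lie_pencil ?ba0 //; apply: da.
rewrite /pencil deriveE // linearD linearZ /= -!deriveE //.
rewrite !derive_lie_partials_pencil // Xpa.
exact: pencil_invariance_identity ab0x ba0x (D_ba0 (Xs x)) (D_ba0 (Xp x)) comm_a.
Qed.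

Lemma pencil_factor_separated a b Y x :
  (forall c d : R, c *: Xp x + d *: Xs x = 0 -> c = 0 /\ d = 0) ->
  commute_on U Xp Xs -> smooth_on U a -> smooth_on U b ->
  (forall y, U y -> lie (pencil a) b y = 0) ->
  (forall y, U y -> lie (pencil b) a y = 0) -> U x ->
  pencil b x = pencil_factor b x *: Y x -> 'D_(Y x) (pencil_factor a) x = 0.
Proof.
move=> indX comm sa sb ab0 ba0 Ux eqb.
apply: (derive_eq0_scale (c := pencil_factor b x) (differentiable_pencil_factor sa Ux)).
  by rewrite -eqb; apply: pencil_neq0.
by rewrite -eqb; apply: pencil_factor_invariant.
Qed.

Lemma kowalewski_pencil_root E F G a b :
  smooth_on U E -> smooth_on U F -> smooth_on U G -> smooth_on U b ->
  (forall y, U y -> E y != 0) ->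
  (forall y, U y ->
     E y * lie Xs F y - F y * lie Xs E y = E y * lie Xp G y - G y * lie Xp E y) ->
  (forall y, U y ->
     E y * lie Xs G y - G y * lie Xs E y = F y * lie Xp G y - G y * lie Xp F y) ->
  (forall y, U y -> E y * a y ^+ 2 + F y * a y + G y = 0) ->
  (forall y, U y -> E y * b y ^+ 2 + F y * b y + G y = 0) ->
  (forall y, U y -> a y != b y) ->
  forall y, U y -> lie (pencil a) b y = 0.
Proof.
move=> sE sF sG sb E0 K1 K2 ra rb ab y Uy.
have dE := smooth_on_differentiable sE Uy; have dF := smooth_on_differentiable sF Uy.
have dG := smooth_on_differentiable sG Uy; have db := smooth_on_differentiable sb Uy.
have D_rb v : 'D_v E y * b y ^+ 2 + E y * (2 * b y * 'D_v b y) + 'D_v F y * b y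
    + F y * 'D_v b y + 'D_v G y = 0.
  rewrite -derive_quadratic //; apply: derive_eq0_open oU Uy _ => z Uz.
  by rewrite !fctE -expr2 rb.
rewrite lie_pencil //.
exact: kowalewski_root_identity (E0 y Uy) (ab y Uy) (ra y Uy) (rb y Uy)
  (K1 y Uy) (K2 y Uy) (D_rb (Xs y)) (D_rb (Xp y)).
Qed.

End Pencil.

Theorem proposition1 (R : realType) (n : nat) (U : set 'rV[R]_(n.+2))
    (Xp Xs : 'rV[R]_(n.+2) -> 'rV[R]_(n.+2)) (H : 'I_n -> 'rV[R]_(n.+2) -> R)
    (E F G x1 x2 : 'rV[R]_(n.+2) -> R) :
  open U ->
  smooth_field U Xp -> smooth_field U Xs ->
  (forall x, U x -> forall a b : R, a *: Xp x + b *: Xs x = 0 -> a = 0 /\ b = 0) ->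
  commute_on U Xp Xs ->
  (forall i, smooth_on U (H i)) ->
  (forall i, first_integral U Xp (H i) /\ first_integral U Xs (H i)) ->
  (forall x, U x -> indep_at x H) ->
  smooth_on U E -> smooth_on U F -> smooth_on U G ->
  (forall x, U x -> E x != 0) ->
  (forall x, U x ->
     E x * lie Xs F x - F x * lie Xs E x = E x * lie Xp G x - G x * lie Xp E x) ->
  (forall x, U x ->
     E x * lie Xs G x - G x * lie Xs E x = F x * lie Xp G x - G x * lie Xp F x) ->
  smooth_on U x1 -> smooth_on U x2 ->
  (forall x, U x -> E x * x1 x ^+ 2 + F x * x1 x + G x = 0) ->
  (forall x, U x -> E x * x2 x ^+ 2 + F x * x2 x + G x = 0) ->
  (forall x, U x -> x1 x != x2 x) ->
  (forall x, U x -> indep_at x (coords x1 x2 H)) ->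
  separating_coordinates U Xp Xs x1 x2 H.
Proof.
move=> oU sXp sXs indX comm sH fiH _ sE sF sG E0 K1 K2 s1 s2 r1 r2 d12 indC.
have d21 y : U y -> x2 y != x1 y by move=> Uy; rewrite eq_sym d12.
have k12 := kowalewski_pencil_root oU sE sF sG s2 E0 K1 K2 r1 r2 d12.
have k21 := kowalewski_pencil_root oU sE sF sG s1 E0 K1 K2 r2 r1 d21.
exists (pencil_factor Xp Xs x1), (pencil_factor Xp Xs x2) => Y1 Y2 cY1 cY2 x Ux.
have dC k := smooth_on_differentiable (smooth_coords k s1 s2 sH) Ux.
have fiHx a i : lie (pencil Xp Xs a) (H i) x = 0.
  have dH y : U y -> differentiable (H i) y by apply: smooth_on_differentiable.
  by have [hp hs] := fiH i; have /(_ x Ux) := first_integral_pencil a dH hp hs.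
have kill1 k : k != idx0 -> lie (pencil Xp Xs x1) (coords x1 x2 H k) x = 0.
  move=> k0; case: (coords_cases x1 x2 H k) => [k_0|->|[i ->]].
  - by rewrite k_0 eqxx in k0.
  - by rewrite coords1; apply: k12.
  - exact: fiHx.
have kill2 k : k != idx1 -> lie (pencil Xp Xs x2) (coords x1 x2 H k) x = 0.
  move=> k1; case: (coords_cases x1 x2 H k) => [->|k_1|[i ->]].
  - by rewrite coords0; apply: k21.
  - by rewrite k_1 eqxx in k1.
  - exact: fiHx.
have eq1 := pencil_coord_field dC (indC x Ux) cY1 Ux (coords0 x1 x2 H) kill1.
have eq2 := pencil_coord_field dC (indC x Ux) cY2 Ux (coords1 x1 x2 H) kill2.
have sep12 := pencil_factor_separated oU sXp sXs (indX x Ux) comm s1 s2 k12 k21 Ux eq2.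
have sep21 := pencil_factor_separated oU sXp sXs (indX x Ux) comm s2 s1 k21 k12 Ux eq1.
by split=> //; split=> //; apply: differentiable_pencil_factor.
Qed.
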